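(* The maps $\operatorname{st}:\mathbf{PP}[I]\to\mathbf{\Sigma}^*[I]$ and $\operatorname{st}:\mathbf{wPP}[I]\to\mathbf{w\Sigma}^*[I]$ defined on basis elements by $$\operatorname{st}(p)=\sum_{l\text{ prelinear extension of }p} l,\qquad \operatorname{st}(w,p)=\sum_{(v,l)\text{ weighted prelinear extension of }(w,p)}(v,l)$$ are morphisms of Hopf monoids.
   Context: A preposet on a finite set $I$ is a reflexive transitive relation $\le$; write $x\sim y$ if $x\le y$ and $y\le x$, and $x<y$ if $x\le y$ and $y\not\le x$; $|q|$ is the number of $\sim$-classes. A total preposet (total preorder) is identified with the ordered set partition $F_1|\cdots|F_k$ of its classes, listed increasingly. A prelinear extension of a preposet $q$ is a total preposet $l$ on $I$ such that $x\le_q y\Rightarrow x\le_l y$ and $x<_q y\Rightarrow x<_l y$ (so each class of $q$ lies in a class of $l$). A weighted preposet $(w,q)$ assigns a real weight to each class of $q$; a weighted prelinear extension $(v,l)$ of it is a prelinear extension $l$ with $v(L)=\sum_{Q\subseteq L}w(Q)$ for each class $L$ of $l$ (sum over classes $Q$ of $q$). $S\subseteq I$ is a lower ideal of $q$ if $y\in S$, $x\le_q y$ imply $x\in S$. $\mathbf{PP}[I]$ (resp. $\mathbf{wPP}[I]$) is the vector space with basis the (weighted) preposets on $I$; it is a Hopf monoid with product the disjoint union (weights carried along) and coproduct $\Delta_{S,T}(q)=q|_S\otimes q|_T$ if $S$ is a lower ideal of $q$ and $0$ otherwise (restricting weights). An ordered set partition of $I$ is a sequence $F_1|\cdots|F_k$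 of nonempty disjoint blocks with union $I$; $F|_S$ is obtained from $(F_1\cap S)|\cdots|(F_k\cap S)$ by deleting empty blocks; $H$ on $S\sqcup T$ is a quasi-shuffle of $F$ on $S$ and $G$ on $T$ if $H|_S=F$, $H|_T=G$. $\mathbf{\Sigma}^*[I]$ has basis the ordered set partitions of $I$, product $F\cdot G=\sum H$ over quasi-shuffles, and coproduct $\Delta_{S,T}(F_1|\cdots|F_k)=(F_1|\cdots|F_j)\otimes(F_{j+1}|\cdots|F_k)$ if $S=F_1\sqcup\cdots\sqcup F_j$ for some $j$, and $0$ otherwise. $\mathbf{w\Sigma}^*$ is the weighted analogue: weighted ordered set partitions, quasi-shuffles in which a merged block $F_a\sqcup G_b$ gets weight $u(F_a)+v(G_b)$ and other blocks keep their weights, and the same deconcatenation coproduct with restricted weights. *)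

From HB Require Import structures.
From mathcomp Require Import all_boot all_order all_algebra all_fingroup.
From mathcomp Require Import finmap.
From mathcomp.multinomials Require Import monalg.
From mathcomp Require Import reals.

Set Implicit Arguments.
Unset Strict Implicit.
Unset Printing Implicit Defensive.

Import GRing.Theory.
Local Open Scope ring_scope.

Section Free.
Variable k : fieldType.

Definition linext (A B : choiceType) (h : A -> {malg k[B]}) (x : {malg k[A]})
  : {malg k[B]} :=
  \sum_(a <- msupp x) mcoeff a x *: h a.

(* tensor product of vectors: the free space on A * B is the tensor
   product of the free spaces on A and on B *)
Definition tens (A B : choiceType) (u : {malg k[A]}) (v : {malg k[B]})
  : {malg k[(A * B)%type]} :=
  \sum_(a <- msupp u) \sum_(b <- msupp v) (mcoeff a u * mcoeff b v) *: << (a, b) >>.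

Definition tensmap (A A' B B' : choiceType)
  (f : {malg k[A]} -> {malg k[A']}) (g : {malg k[B]} -> {malg k[B']})
  (x : {malg k[(A * B)%type]}) : {malg k[(A' * B')%type]} :=
  linext (fun ab => tens (f << ab.1 >>) (g << ab.2 >>)) x.

Definition inspan (A : choiceType) (P : A -> bool) (x : {malg k[A]}) : Prop :=
  forall a, a \in msupp x -> P a.

End Free.

(* Species are evaluated on finite subsets I of a finite universe T.   *)
(* Relabellings along bijections are given by permutations of T.       *)

Section Combinatorics.
Variable T : finType.

Definition pdom (p : {set T * T}) : {set T} := [set x | (x, x) \in p].

Definition is_preposet (I : {set T}) (p : {set T * T}) : bool :=
  [&& p \subset setX I I,
      [forall x in I, (x, x) \in p] &
      [forall x, forall y, forall z,
          ((x, y) \in p) && ((y, z) \in p) ==> ((x, z) \in p)]].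

Definition ple (p : {set T * T}) x y := (x, y) \in p.
Definition plt (p : {set T * T}) x y := ((x, y) \in p) && ((y, x) \notin p).

Definition lower_ideal (p : {set T * T}) (S : {set T}) : bool :=
  [forall x, forall y, ple p x y && (y \in S) ==> (x \in S)].

Definition prestr (p : {set T * T}) (S : {set T}) : {set T * T} :=
  p :&: setX S S.

Definition is_total (I : {set T}) (l : {set T * T}) : bool :=
  is_preposet I l && [forall x in I, forall y in I, ple l x y || ple l y x].

Definition prelin_ext (l q : {set T * T}) : bool :=
  is_total (pdom q) l &&
  [forall x, forall y, (ple q x y ==> ple l x y) && (plt q x y ==> plt l x y)].

Definition pclass (p : {set T * T}) (x : T) : {set T} :=
  [set y | ((x, y) \in p) && ((y, x) \in p)].

Definition is_class (p : {set T * T}) (Q : {set T}) : bool :=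
  [exists x, (x \in pdom p) && (Q == pclass p x)].

Definition is_osp (I : {set T}) (F : seq {set T}) : bool :=
  [&& all (fun B => B != set0) F,
      pairwise (fun A B : set_of T => [disjoint A & B]) F &
      \bigcup_(B <- F) B == I].

Definition osp_ground (F : seq {set T}) : {set T} := \bigcup_(B <- F) B.

Definition osp_restr (F : seq {set T}) (S : {set T}) : seq {set T} :=
  [seq B <- [seq B :&: S | B <- F] | B != set0].

(* The total preposet whose classes, listed increasingly, are F_1,...,F_k *)
Definition osp_rel (F : seq {set T}) : {set T * T} :=
  [set xy | [exists i : 'I_(size F), exists j : 'I_(size F),
              [&& (i <= j)%N, xy.1 \in nth set0 F i & xy.2 \in nth set0 F j]]].

(* Finite sum over all ordered set partitions F of I satisfying P.
   (Every ordered set partition of I has at most #|T| blocks.) *)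
Definition osp_sum (V : zmodType) (I : {set T}) (P : seq {set T} -> bool)
  (f : seq {set T} -> V) : V :=
  \sum_(n < #|T|.+1) \sum_(t : n.-tuple {set T} | is_osp I t && P t) f t.

End Combinatorics.

Section Unweighted.
Variables (T : finType) (k : fieldType).

Notation PPb := {set T * T}.
Notation Sb := (seq {set T}).

Definition PP_in (I : {set T}) (p : PPb) : bool := is_preposet I p.
Definition Sig_in (I : {set T}) (F : Sb) : bool := is_osp I F.

Definition PP_one : PPb := set0.
Definition Sig_one : Sb := [::].

Definition PP_relabel (s : {perm T}) (p : PPb) : PPb :=
  [set (s xy.1, s xy.2) | xy in p].
Definition Sig_relabel (s : {perm T}) (F : Sb) : Sb := map (fun B : {set T} => (s : T -> T) @: B) F.

Definition PP_mul (pq : PPb * PPb) : {malg k[PPb]} := << pq.1 :|: pq.2 >>.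

Definition PP_comul (S U : {set T}) (p : PPb) : {malg k[(PPb * PPb)%type]} :=
  if lower_ideal p S then << (prestr p S, prestr p U) >> else 0.

(* product on basis elements: sum of quasi-shuffles *)
Definition Sig_mul (FG : Sb * Sb) : {malg k[Sb]} :=
  let S := osp_ground FG.1 in let U := osp_ground FG.2 in
  osp_sum (S :|: U)
    (fun H => (osp_restr H S == FG.1) && (osp_restr H U == FG.2))
    (fun H => << H >>).

Definition Sig_comul (S U : {set T}) (F : Sb) : {malg k[(Sb * Sb)%type]} :=
  \sum_(j < (size F).+1 | osp_ground (take j F) == S) << (take j F, drop j F) >>.

Definition st_PP_basis (p : PPb) : {malg k[Sb]} :=
  osp_sum (pdom p) (fun F => prelin_ext (osp_rel F) p) (fun F => << F >>).

Definition st_PP : {malg k[PPb]} -> {malg k[Sb]} := linext st_PP_basis.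

End Unweighted.

Section Weighted.
Variables (T : finType) (k : fieldType) (R : realType).

(* a weighted preposet: a preposet p together with the weight w Q of
   each class Q of p (w vanishes on subsets that are not classes) *)
Notation wPPb := ({set T * T} * {ffun {set T} -> R})%type.
Notation wSb := (seq ({set T} * R)).

Definition wPP_in (I : {set T}) (pw : wPPb) : bool :=
  is_preposet I pw.1 && [forall Q, ~~ is_class pw.1 Q ==> (pw.2 Q == 0)].
Definition wSig_in (I : {set T}) (F : wSb) : bool := is_osp I (map fst F).

Definition wPP_one : wPPb := (set0, [ffun => 0]).
Definition wSig_one : wSb := [::].

Definition wPP_relabel (s : {perm T}) (pw : wPPb) : wPPb :=
  (PP_relabel s pw.1, [ffun Q : {set T} => pw.2 ((s^-1)%g @: Q)]).
Definition wSig_relabel (s : {perm T}) (F : wSb) : wSb :=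
  map (fun B : {set T} * R => ((s : T -> T) @: B.1, B.2)) F.

Definition wPP_mul (pq : wPPb * wPPb) : {malg k[wPPb]} :=
  << (pq.1.1 :|: pq.2.1, [ffun Q : {set T} => pq.1.2 Q + pq.2.2 Q]) >>.

Definition wrestr (w : {ffun {set T} -> R}) (S : {set T}) : {ffun {set T} -> R} :=
  [ffun Q : {set T} => if Q \subset S then w Q else 0].

Definition wPP_comul (S U : {set T}) (pw : wPPb) : {malg k[(wPPb * wPPb)%type]} :=
  if lower_ideal pw.1 S then
    << ((prestr pw.1 S, wrestr pw.2 S), (prestr pw.1 U, wrestr pw.2 U)) >>
  else 0.

(* weight of the block of F equal to X (0 if there is none, e.g. X = set0) *)
Definition wlookup (F : wSb) (X : {set T}) : R :=
  \sum_(B <- F | B.1 == X) B.2.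

(* weighted quasi-shuffles: a block H_c gets weight u(H_c \cap S) + v(H_c \cap U),
   i.e. u(F_a)+v(G_b) for merged blocks, and its old weight otherwise *)
Definition wSig_mul (FG : wSb * wSb) : {malg k[wSb]} :=
  let S := osp_ground (map fst FG.1) in let U := osp_ground (map fst FG.2) in
  osp_sum (S :|: U)
    (fun H => (osp_restr H S == map fst FG.1) && (osp_restr H U == map fst FG.2))
    (fun H => << [seq (B, wlookup FG.1 (B :&: S) + wlookup FG.2 (B :&: U)) | B <- H] >>).

Definition wSig_comul (S U : {set T}) (F : wSb) : {malg k[(wSb * wSb)%type]} :=
  \sum_(j < (size F).+1 | osp_ground (take j (map fst F)) == S)
     << (take j F, drop j F) >>.

Definition st_wPP_basis (pw : wPPb) : {malg k[wSb]} :=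
  osp_sum (pdom pw.1) (fun F => prelin_ext (osp_rel F) pw.1)
    (fun F => << map (fun L : {set T} =>
                   (L, \sum_(Q : {set T} | is_class pw.1 Q && (Q \subset L)) pw.2 Q)) F >>).

Definition st_wPP : {malg k[wPPb]} -> {malg k[wSb]} := linext st_wPP_basis.

End Weighted.

(* Morphisms of Hopf monoids between two Hopf monoids (over the finite
   subsets of T) presented on bases:
   - inA I a       : a is a basis element of A[I];
   - relA s a      : relabelling of a along the bijection s;
   - muA (a, b)    : product of basis elements a in A[S], b in A[U];
   - deltaA S U a  : coproduct Delta_{S,U} of the basis element a of A[S \sqcup U];
   - oneA          : the basis element of A[set0] (the unit);
   the counit of A[set0] is the coefficient of oneA. *)

Definition hopf_monoid_morphism (T : finType) (k : fieldType) (A B : choiceType)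
  (inA : {set T} -> A -> bool) (inB : {set T} -> B -> bool)
  (relA : {perm T} -> A -> A) (relB : {perm T} -> B -> B)
  (muA : A * A -> {malg k[A]}) (muB : B * B -> {malg k[B]})
  (deltaA : {set T} -> {set T} -> A -> {malg k[(A * A)%type]})
  (deltaB : {set T} -> {set T} -> B -> {malg k[(B * B)%type]})
  (oneA : A) (oneB : B)
  (f : {malg k[A]} -> {malg k[B]}) : Prop :=
  (
      forall (c : k) (x y : {malg k[A]}), f (c *: x + y) = c *: f x + f y) /\
      (forall (I : {set T}) (x : {malg k[A]}), inspan (inA I) x -> inspan (inB I) (f x)) /\
      (forall (s : {perm T}) (x : {malg k[A]}),
        f (linext (fun a => << relA s a >>) x) = linext (fun b => << relB s b >>) (f x)) /\
      (f << oneA >> = << oneB >>) /\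
      (forall x : {malg k[A]}, inspan (inA set0) x -> mcoeff oneB (f x) = mcoeff oneA x) /\
      (forall (S U : {set T}) (x : {malg k[(A * A)%type]}), [disjoint S & U] ->
        inspan (fun ab => inA S ab.1 && inA U ab.2) x ->
        f (linext muA x) = linext muB (tensmap f f x)) /\
      (forall (S U : {set T}) (x : {malg k[A]}), [disjoint S & U] ->
        inspan (inA (S :|: U)) x ->
        tensmap f f (linext (deltaA S U) x) = linext (deltaB S U) (f x)).

(* The maps are linear extensions of maps on basis elements, so by a general
   criterion ([linext_hopf_morphism]) it suffices to check every axiom on
   basis elements.  On a preposet p, st is a sum over the prelinear
   extensions of p ([prelin_sum]), and the two combinatorial facts behind the
   proposition are:
   - the prelinear extensions of a disjoint union p :|: q are exactly the
     quasi-shuffles of a prelinear extension of p and one of q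
     ([prelin_union], summed up in [prelin_sum_union]);
   - a concatenation F1 ++ F2 of ordered set partitions of S and U is a
     prelinear extension of p iff S is a lower ideal of p and F1, F2 are
     prelinear extensions of the restrictions of p ([prelin_cat], summed up
     in [prelin_sum_cut]). *)
From HB Require Import structures.
From mathcomp Require Import all_boot all_order all_algebra all_fingroup.
From mathcomp Require Import finmap.
From mathcomp.multinomials Require Import monalg.
From mathcomp Require Import reals.

Set Implicit Arguments.
Unset Strict Implicit.
Unset Printing Implicit Defensive.
Import GRing.Theory.
Local Open Scope ring_scope.

Section FreeModules.
Variable k : fieldType.

Lemma malgUZ (A : choiceType) (c : k) (a : A) :
  << c *g a >> = c *: << a >> :> {malg k[A]}.
Proof. by apply/malgP => b; rewrite mcoeffZ !mcoeffU mulr_natr. Qed.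

Section LinearExtension.
Variables (A B : choiceType) (h : A -> {malg k[B]}).

Lemma linext_supp (x : {malg k[A]}) (D : {fset A}) :
  (msupp x `<=` D)%fset -> linext h x = \sum_(a <- D) x@_a *: h a.
Proof.
move=> sxD; rewrite /linext (big_fset_incl _ sxD) // => a _ /mcoeff_outdom ->.
by rewrite scale0r.
Qed.

Lemma linext_linear : linear (linext h).
Proof.
move=> c x y; pose D := (msupp x `|` msupp y `|` msupp (c *: x + y))%fset.
have sxD : (msupp x `<=` D)%fset by apply/fsubsetP => a ha; rewrite !in_fsetU ha.
have syD : (msupp y `<=` D)%fset by apply/fsubsetP => a ha; rewrite !in_fsetU ha orbT.
have sD : (msupp (c *: x + y) `<=` D)%fset.
  by apply/fsubsetP => a ha; rewrite !in_fsetU ha orbT.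
rewrite !(linext_supp sxD, linext_supp syD, linext_supp sD) scaler_sumr -big_split.
by apply: eq_bigr => a _; rewrite mcoeffD mcoeffZ scalerDl scalerA.
Qed.

HB.instance Definition _ :=
  GRing.isLinear.Build k {malg k[A]} {malg k[B]} *:%R (linext h) linext_linear.

Lemma linextU (a : A) : linext h << a >> = h a.
Proof. by rewrite /linext msuppU oner_eq0 big_seq_fset1 mcoeffUU scale1r. Qed.

End LinearExtension.

Lemma eq_linext (A B : choiceType) (h1 h2 : A -> {malg k[B]}) x :
  h1 =1 h2 -> linext h1 x = linext h2 x.
Proof. by move=> e; apply: eq_bigr => a _; rewrite e. Qed.

Lemma linear_span (A : choiceType) (V : lmodType k) (P : A -> bool)
    (f g : {malg k[A]} -> V) (x : {malg k[A]}) :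
  linear f -> linear g -> (forall a, P a -> f << a >> = g << a >>) ->
  inspan P x -> f x = g x.
Proof.
move=> fL gL efg Px.
pose F : {linear {malg k[A]} -> V} := HB.pack f (GRing.isLinear.Build k _ _ _ f fL).
pose G : {linear {malg k[A]} -> V} := HB.pack g (GRing.isLinear.Build k _ _ _ g gL).
rewrite (monalgE x) -[f _]/(F _) -[g _]/(G _) !linear_sum !big_seq.
by apply: eq_bigr => a xa; rewrite malgUZ !linearZ /= efg ?Px.
Qed.

Lemma tensE (A B : choiceType) (u : {malg k[A]}) (v : {malg k[B]}) :
  tens u v = linext (fun a => linext (fun b => << (a, b) >>) v) u.
Proof.
rewrite /tens /linext; apply: eq_bigr => a _; rewrite scaler_sumr.
by apply: eq_bigr => b _; rewrite scalerA.
Qed.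

Lemma tensmapU (A A' B B' : choiceType) (f : {malg k[A]} -> {malg k[A']})
    (g : {malg k[B]} -> {malg k[B']}) (a : A) (b : B) :
  tensmap f g << (a, b) >> = tens (f << a >>) (g << b >>).
Proof. exact: linextU. Qed.

HB.instance Definition _ (A A' B B' : choiceType) (f : {malg k[A]} -> {malg k[A']})
    (g : {malg k[B]} -> {malg k[B']}) :=
  GRing.isLinear.Build k _ _ *:%R (tensmap f g) (linext_linear _).

Lemma inspanU (A : choiceType) (P : A -> bool) (a : A) :
  P a -> inspan P (<< a >> : {malg k[A]}).
Proof. by move=> Pa b; rewrite msuppU oner_eq0 in_fset1 => /eqP ->. Qed.

Lemma inspan_sum (A : choiceType) (P : A -> bool) (I : Type) (r : seq I)
    (Q : pred I) (F : I -> {malg k[A]}) :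
  (forall i, Q i -> inspan P (F i)) -> inspan P (\sum_(i <- r | Q i) F i).
Proof.
move=> PF; elim/big_rec: _ => [a|i x Qi Px a]; first by rewrite msupp0.
move/(fsubsetP (msuppD_le _ _)); rewrite in_fsetU => /orP[]; last exact: Px.
exact: PF.
Qed.

Lemma inspan_linext (A B : choiceType) (P : A -> bool) (Q : B -> bool)
    (h : A -> {malg k[B]}) (x : {malg k[A]}) :
  inspan P x -> (forall a, P a -> inspan Q (h a)) -> inspan Q (linext h x).
Proof.
move=> Px Qh; rewrite /linext big_seq; apply: inspan_sum => a /Px /Qh Qha b.
by move/(fsubsetP (msuppZ_le _ _)); apply: Qha.
Qed.

End FreeModules.

Lemma linext_hopf_morphism (T : finType) (k : fieldType) (A B : choiceType)
    (inA : {set T} -> A -> bool) (inB : {set T} -> B -> bool)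
    (relA : {perm T} -> A -> A) (relB : {perm T} -> B -> B)
    (muA : A * A -> {malg k[A]}) (muB : B * B -> {malg k[B]})
    (deltaA : {set T} -> {set T} -> A -> {malg k[(A * A)%type]})
    (deltaB : {set T} -> {set T} -> B -> {malg k[(B * B)%type]})
    (oneA : A) (oneB : B) (h : A -> {malg k[B]}) :
  (forall I a, inA I a -> inspan (inB I) (h a)) ->
  (forall s a, h (relA s a) = linext (fun b => << relB s b >>) (h a)) ->
  h oneA = << oneB >> ->
  (forall a, inA set0 a -> a = oneA) ->
  (forall (S U : {set T}) a b, [disjoint S & U] -> inA S a -> inA U b ->
     linext h (muA (a, b)) = linext muB (tens (h a) (h b))) ->
  (forall (S U : {set T}) a, [disjoint S & U] -> inA (S :|: U) a ->
     linext (fun aa => tens (h aa.1) (h aa.2)) (deltaA S U a)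
     = linext (deltaB S U) (h a)) ->
  hopf_monoid_morphism inA inB relA relB muA muB deltaA deltaB oneA oneB (linext h).
Proof.
move=> h_grade h_rel h_one h_empty h_mul h_comul.
have hU a : linext h << a >> = h a := linextU h a.
split; first exact: linext_linear.
split; first by move=> I x Ix; apply: inspan_linext Ix (h_grade I).
split.
  move=> s x; apply: (linear_span (P := xpredT)
    (f := linext h \o linext (fun a => << relA s a >>))
    (g := linext (fun b => << relB s b >>) \o linext h)); try exact: linearP.
    by move=> a _ /=; rewrite !linextU h_rel.
  by [].
split; first by rewrite hU.
split.
  move=> x x0; apply: (linear_span (V := k^o) (P := inA set0)
    (f := fun x => mcoeff oneB (linext h x) : k^o)
    (g := fun x => mcoeff oneA x : k^o)) x0.
  - by move=> c y z; rewrite linext_linear mcoeffD mcoeffZ.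
  - by move=> c y z; rewrite mcoeffD mcoeffZ.
  - by move=> a /h_empty ->; rewrite hU h_one !mcoeffUU.
split.
  move=> S U x dSU; apply: (linear_span
    (f := linext h \o linext muA) (g := linext muB \o tensmap (linext h) (linext h)));
    try exact: linearP.
  by move=> [a b] /andP[Sa Ub] /=; rewrite linextU tensmapU !hU (h_mul S U).
move=> S U x dSU; apply: (linear_span
  (f := tensmap (linext h) (linext h) \o linext (deltaA S U))
  (g := linext (deltaB S U) \o linext h)); try exact: linearP.
move=> a SUa /=; rewrite (linextU (deltaA S U) a) (hU a) -(h_comul S U a dSU SUa).
by apply: eq_linext => -[a1 a2]; rewrite /= !hU.
Qed.

Section OrderedSetPartitions.
Variable T : finType.
Implicit Types (F G : seq {set T}) (S U I C D : {set T}).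
Local Open Scope nat_scope.

(* [osp_le F x y]: the block of x comes weakly before the block of y in F;
   this is the total preposet [osp_rel F], computed block by block. *)
Fixpoint osp_le F (x y : T) : bool :=
  if F is C :: F' then
    ((x \in C) && ((y \in C) || (y \in osp_ground F'))) || osp_le F' x y
  else false.

Lemma osp_ground_nil : osp_ground [::] = set0 :> {set T}.
Proof. by rewrite /osp_ground big_nil. Qed.

Lemma osp_ground_cons C F : osp_ground (C :: F) = C :|: osp_ground F.
Proof. by rewrite /osp_ground big_cons. Qed.

Lemma osp_ground_cat F G : osp_ground (F ++ G) = osp_ground F :|: osp_ground G.
Proof. by rewrite /osp_ground big_cat. Qed.

Lemma mem_osp_ground F x : (x \in osp_ground F) = has (fun C => x \in C) F.
Proof.
elim: F => [|C F IH]; first by rewrite osp_ground_nil in_set0.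
by rewrite osp_ground_cons in_setU IH.
Qed.

Lemma osp_leP F x y :
  reflect (exists i j, [&& i <= j, j < size F, x \in nth set0 F i & y \in nth set0 F j])
          (osp_le F x y).
Proof.
elim: F => [|C F IH] /=; first by constructor; case=> i [j]; rewrite andbF.
apply: (iffP idP).
- case/orP => [/andP[xC /orP[yC|]] | /IH [i [j /and4P[ij jF xi yj]]]].
  + by exists 0, 0; rewrite /= xC yC.
  + rewrite mem_osp_ground => /(has_nthP set0) [j jF yj].
    by exists 0, j.+1; rewrite /= xC yj ltnS jF.
  + by exists i.+1, j.+1; rewrite /= !ltnS ij jF xi yj.
- case=> [[|i] [[|j] /and4P[ij jF xi yj]]] //=; first by rewrite xi yj.
  + rewrite xi mem_osp_ground /=; apply/orP; left; apply/orP; right.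
    by apply/(has_nthP set0); exists j.
  + by apply/orP; right; apply/IH; exists i, j; rewrite -ltnS ij -ltnS jF xi yj.
Qed.

Lemma mem_osp_rel F x y : ((x, y) \in osp_rel F) = osp_le F x y.
Proof.
rewrite inE /=; apply/existsP/osp_leP.
- by case=> i /existsP [j /and3P[ij xi yj]]; exists i, j; rewrite ij ltn_ord xi yj.
- case=> i [j /and4P[ij jF xi yj]]; have iF := leq_ltn_trans ij jF.
  by exists (Ordinal iF); apply/existsP; exists (Ordinal jF); rewrite /= ij xi yj.
Qed.

Lemma osp_ground_sub F C : C \in F -> C \subset osp_ground F.
Proof.
by move=> CF; apply/subsetP => x xC; rewrite mem_osp_ground; apply/hasP; exists C.
Qed.

Lemma osp_le_ground F x y :
  osp_le F x y -> (x \in osp_ground F) && (y \in osp_ground F).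
Proof.
elim: F => [//|C F IH] /=; rewrite !osp_ground_cons !in_setU.
by case/orP => [/andP[-> /orP[->|->]]|/IH/andP[-> ->]]; rewrite ?orbT.
Qed.

Lemma osp_le_cat F G x y : osp_le (F ++ G) x y =
  [|| osp_le F x y, (x \in osp_ground F) && (y \in osp_ground G) | osp_le G x y].
Proof.
elim: F => [|C F IH] /=; first by rewrite osp_ground_nil in_set0.
rewrite IH osp_ground_cat osp_ground_cons !in_setU.
by case: (x \in C); case: (y \in C); case: (y \in osp_ground F);
  case: (y \in osp_ground G); case: (osp_le F x y); case: (x \in osp_ground F).
Qed.

Lemma osp_restr_cons C F S : osp_restr (C :: F) S =
  if C :&: S != set0 then (C :&: S) :: osp_restr F S else osp_restr F S.
Proof. by []. Qed.

Lemma osp_ground_restr F S : osp_ground (osp_restr F S) = osp_ground F :&: S.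
Proof.
elim: F => [|C F IH]; first by rewrite osp_ground_nil set0I.
rewrite osp_restr_cons osp_ground_cons setIUl -IH.
by case: ifPn => [_|/negPn/eqP ->]; rewrite ?osp_ground_cons ?set0U.
Qed.

Lemma osp_le_restr F S x y :
  osp_le (osp_restr F S) x y = [&& x \in S, y \in S & osp_le F x y].
Proof.
elim: F => [|C F IH] /=; first by rewrite !andbF.
rewrite osp_restr_cons; case: ifPn => [_|/negPn/eqP CS] /=.
  rewrite IH osp_ground_restr !in_setI.
  by case: (x \in C); case: (y \in C); case: (y \in osp_ground F);
    case: (osp_le F x y); case: (x \in S); case: (y \in S).
rewrite IH; case xS: (x \in S); case xC: (x \in C) => //=.
by have := in_set0 x; rewrite -CS in_setI xC xS.
Qed.

Lemma disjointsU (C D E : {set T}) :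
  [disjoint C :|: D & E] = [disjoint C & E] && [disjoint D & E].
Proof. by rewrite -!setI_eq0 setIUl setU_eq0. Qed.

Lemma disjoint_osp_ground C F :
  all (fun D => [disjoint C & D]) F = [disjoint C & osp_ground F].
Proof.
elim: F => [|D F IH] /=; first by rewrite osp_ground_nil -setI_eq0 setI0 eqxx.
by rewrite IH osp_ground_cons ![[disjoint C & _]]disjoint_sym disjointsU.
Qed.

Definition osp_wf F : bool :=
  all (fun C => C != set0) F && pairwise (fun C D : {set T} => [disjoint C & D]) F.

Lemma is_ospE I F : is_osp I F = osp_wf F && (osp_ground F == I).
Proof. by rewrite /is_osp /osp_wf andbA. Qed.

Lemma osp_wf_cons C F :
  osp_wf (C :: F) = [&& C != set0, [disjoint C & osp_ground F] & osp_wf F].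
Proof.
rewrite /osp_wf /= -disjoint_osp_ground.
by case: (C != set0); case: (all _ F); case: (all _ F); case: (pairwise _ F).
Qed.

Lemma osp_wf_cat F G : osp_wf (F ++ G) =
  [&& osp_wf F, osp_wf G & [disjoint osp_ground F & osp_ground G]].
Proof.
elim: F => [|C F IH].
  by rewrite /= osp_ground_nil -setI_eq0 set0I eqxx andbT.
rewrite cat_cons !osp_wf_cons IH osp_ground_cat osp_ground_cons disjointsU.
rewrite [[disjoint C & _ :|: _]]disjoint_sym disjointsU.
rewrite [[disjoint osp_ground F & C]]disjoint_sym.
rewrite [[disjoint osp_ground G & C]]disjoint_sym.
by case: (C != set0); case: [disjoint C & osp_ground F];
  case: [disjoint C & osp_ground G];
  case: (osp_wf F); case: (osp_wf G); case: [disjoint osp_ground F & osp_ground G].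
Qed.

Lemma osp_wf_restr F S : osp_wf F -> osp_wf (osp_restr F S).
Proof.
elim: F => [//|C F IH]; rewrite osp_wf_cons osp_restr_cons => /and3P[_ dCF wfF].
case: ifP => [CS|_]; last exact: IH.
rewrite osp_wf_cons CS IH // andbT osp_ground_restr.
by apply: disjointW dCF; apply/subsetP => x /setIP[].
Qed.

Lemma osp_wf_uniq F : osp_wf F -> uniq F.
Proof.
elim: F => [//|C F IH]; rewrite osp_wf_cons => /and3P[/set0Pn[x xC] dCF wfF] /=.
rewrite IH // andbT; apply/negP => /osp_ground_sub/subsetP/(_ x xC).
by rewrite (disjointFr dCF xC).
Qed.

Lemma is_osp_ground I F : is_osp I F -> osp_ground F = I.
Proof. by rewrite is_ospE => /andP[_ /eqP]. Qed.

Lemma is_osp_restr I F S : is_osp I F -> is_osp (I :&: S) (osp_restr F S).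
Proof.
rewrite !is_ospE => /andP[wfF /eqP <-].
by rewrite osp_wf_restr // osp_ground_restr eqxx.
Qed.

Lemma is_osp_cat S U F G :
  [disjoint S & U] -> is_osp S F -> is_osp U G -> is_osp (S :|: U) (F ++ G).
Proof.
rewrite !is_ospE => dSU /andP[wfF /eqP gF] /andP[wfG /eqP gG].
by rewrite osp_wf_cat osp_ground_cat gF gG wfF wfG dSU eqxx.
Qed.

Lemma is_osp_nil : is_osp set0 ([::] : seq {set T}).
Proof. by rewrite is_ospE osp_ground_nil eqxx. Qed.

Lemma is_osp0 F : is_osp set0 F -> F = [::].
Proof.
case: F => [//|C F]; rewrite is_ospE osp_wf_cons osp_ground_cons.
case/andP => /and3P[/set0Pn[x xC] _ _]; rewrite -subset0 => /subsetP/(_ x).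
by rewrite in_setU xC in_set0 => /(_ isT).
Qed.

(* An ordered set partition has at most #|T| blocks: this is why [osp_sum]
   ranges over all of them. *)
Lemma is_osp_size I F : is_osp I F -> size F < #|T|.+1.
Proof.
rewrite is_ospE ltnS => /andP[wfF _]; apply: leq_trans (max_card (osp_ground F)).
elim: F wfF => [//|C F IH]; rewrite osp_wf_cons => /and3P[/set0Pn[x xC] dCF wfF].
rewrite osp_ground_cons cardsU (disjoint_setI0 dCF) cards0 subn0 /= -add1n.
by rewrite leq_add ?IH // card_gt0; apply/set0Pn; exists x.
Qed.

Lemma osp_rel_total F : osp_wf F -> is_total (osp_ground F) (osp_rel F).
Proof.
move=> wfF; have le_refl x : x \in osp_ground F -> osp_le F x x.
  elim: F {wfF} => [|C F IH]; rewrite ?osp_ground_nil ?in_set0 // osp_ground_cons.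
  by rewrite in_setU /= => /orP[->|/IH ->]; rewrite ?orbT.
have le_total x y : x \in osp_ground F -> y \in osp_ground F ->
    osp_le F x y || osp_le F y x.
  elim: F {wfF le_refl} => [|C F IH]; rewrite ?osp_ground_nil ?in_set0 //.
  rewrite !osp_ground_cons !in_setU /=.
  by case: (x \in C); case: (y \in C) => //= xF yF; rewrite ?yF ?xF ?orbT ?IH.
have le_trans x y z : osp_le F x y -> osp_le F y z -> osp_le F x z.
  elim: F wfF {le_refl le_total} => [//|C F IH]; rewrite osp_wf_cons /=.
  case/and3P => _ dCF wfF; case/orP => [/andP[xC _] le_yz | le_xy le_yz].
    have /andP[_] := @osp_le_ground (C :: F) y z le_yz.
    by rewrite osp_ground_cons in_setU xC /= => ->.
  have /andP[_ yF] := osp_le_ground le_xy.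
  by move: le_yz; rewrite (disjointFl dCF yF) /= => le_yz; rewrite IH ?orbT.
apply/andP; split; last first.
  apply/forall_inP => x xF; apply/forall_inP => y yF.
  by rewrite /ple !mem_osp_rel le_total.
apply/and3P; split.
- by apply/subsetP => -[x y]; rewrite mem_osp_rel in_setX => /osp_le_ground.
- by apply/forall_inP => x xF; rewrite mem_osp_rel le_refl.
- apply/forallP => x; apply/forallP => y; apply/forallP => z; apply/implyP.
  by rewrite !mem_osp_rel => /andP[]; apply: le_trans.
Qed.


Lemma osp_restr_cat F G S : osp_restr (F ++ G) S = osp_restr F S ++ osp_restr G S.
Proof. by rewrite /osp_restr map_cat filter_cat. Qed.

Lemma osp_restr_sub F S : osp_wf F -> osp_ground F \subset S -> osp_restr F S = F.
Proof.
elim: F => [//|C F IH]; rewrite osp_wf_cons osp_ground_cons subUset.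
by case/and3P => C0 _ wfF /andP[CS FS]; rewrite osp_restr_cons (setIidPl CS) C0 IH.
Qed.

Lemma osp_restr_disjoint F S : [disjoint osp_ground F & S] -> osp_restr F S = [::].
Proof.
elim: F => [//|C F IH]; rewrite osp_ground_cons disjointsU => /andP[dCS dFS].
by rewrite osp_restr_cons (disjoint_setI0 dCS) eqxx IH.
Qed.

Lemma osp_restr_cat_osp S U F1 F2 : [disjoint S & U] -> is_osp S F1 -> is_osp U F2 ->
  osp_restr (F1 ++ F2) S = F1 /\ osp_restr (F1 ++ F2) U = F2.
Proof.
rewrite !is_ospE => dSU /andP[wf1 /eqP g1] /andP[wf2 /eqP g2].
rewrite !osp_restr_cat (osp_restr_sub (S := S) wf1) ?g1 //.
rewrite (osp_restr_sub (S := U) wf2) ?g2 // !osp_restr_disjoint ?cats0 ?g1 ?g2 //.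
by rewrite disjoint_sym.
Qed.

End OrderedSetPartitions.

Section OspSums.
Variables (T : finType) (V : zmodType).
Implicit Types (F G H : seq {set T}) (S U I : {set T}) (P Q : pred (seq {set T})).

Lemma eq_osp_sum I P Q (f g : seq {set T} -> V) :
  (forall F, is_osp I F -> P F = Q F) -> (forall F, is_osp I F -> Q F -> f F = g F) ->
  osp_sum I P f = osp_sum I Q g.
Proof.
move=> ePQ efg; apply: eq_bigr => n _; apply: eq_big => [t|t /andP[It Pt]].
  by case It: (is_osp I t); rewrite //= ePQ.
by apply: efg; rewrite // -ePQ.
Qed.

Lemma eq_osp_sumr I P (f g : seq {set T} -> V) :
  (forall F, is_osp I F -> P F -> f F = g F) -> osp_sum I P f = osp_sum I P g.
Proof. exact: eq_osp_sum. Qed.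

Lemma osp_sum_eq0 I P (f : seq {set T} -> V) :
  (forall F, is_osp I F -> P F -> f F = 0) -> osp_sum I P f = 0.
Proof. by move=> f0; apply: big1 => n _; apply: big1 => t /andP[]; apply: f0. Qed.

Lemma osp_sum_if I P Q (f : seq {set T} -> V) :
  osp_sum I P (fun F => if Q F then f F else 0) = osp_sum I (fun F => P F && Q F) f.
Proof.
by apply: eq_bigr => n _; rewrite -big_mkcondr; apply: eq_bigl => t; rewrite andbA.
Qed.

Lemma exchange_osp_sum (W : zmodType) I J P Q (h : seq {set T} -> seq {set T} -> W) :
  osp_sum I P (fun F => osp_sum J Q (h F)) = osp_sum J Q (fun G => osp_sum I P (h^~ G)).
Proof.
rewrite /osp_sum; under eq_bigr => n _ do rewrite exchange_big.
rewrite exchange_big; apply: eq_bigr => m _.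
by under eq_bigr => n _ do rewrite exchange_big; rewrite exchange_big.
Qed.

Lemma osp_sum_big (J : Type) (r : seq J) (R : pred J) I P (h : J -> seq {set T} -> V) :
  \sum_(j <- r | R j) osp_sum I P (h j)
  = osp_sum I P (fun F => \sum_(j <- r | R j) h j F).
Proof.
by rewrite /osp_sum exchange_big; apply: eq_bigr => n _; rewrite exchange_big.
Qed.

Lemma osp_sum_delta I P X (c : seq {set T} -> V) :
  osp_sum I P (fun F => if F == X then c F else 0)
  = if is_osp I X && P X then c X else 0.
Proof.
rewrite /osp_sum; case: ifPn => [/andP[IX PX]|nX]; last first.
  apply: big1 => n _; apply: big1 => t /andP[It Pt]; case: eqP => // tX.
  by move: nX; rewrite -tX It Pt.
rewrite (bigD1 (Ordinal (is_osp_size IX))) //= [Y in _ + Y]big1 ?addr0; last first.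
  move=> n nX; apply: big1 => t _; case: eqP => // tX.
  by move: nX; rewrite -val_eqE /= -tX size_tuple eqxx.
rewrite (bigD1 (in_tuple X)) /= ?IX ?PX // [Y in _ + Y]big1 ?addr0 ?eqxx //.
by move=> t /andP[_ /eqP tX]; case: eqP => // e; case: tX; apply: val_inj.
Qed.

Lemma osp_sum0 P (g : seq {set T} -> V) :
  osp_sum set0 P g = if P [::] then g [::] else 0.
Proof.
rewrite (eq_osp_sumr (g := fun F => if F == [::] then g F else 0)).
  by rewrite osp_sum_delta is_osp_nil.
by move=> F /is_osp0 ->.
Qed.

Lemma osp_sum_fiber I J (phi : seq {set T} -> seq {set T}) P Q (g : seq {set T} -> V) :
  (forall H, is_osp J H -> is_osp I (phi H)) ->
  osp_sum I P (fun F => osp_sum J (fun H => (phi H == F) && Q H) g)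
  = osp_sum J (fun H => P (phi H) && Q H) g.
Proof.
move=> phiJ; transitivity (osp_sum I P (fun F =>
    osp_sum J Q (fun H => if phi H == F then g H else 0))).
  apply: eq_osp_sumr => F _ _; rewrite osp_sum_if.
  by apply: eq_osp_sum => // H _; rewrite andbC.
transitivity (osp_sum J Q (fun H => if P (phi H) then g H else 0)); last first.
  by rewrite osp_sum_if; apply: eq_osp_sum => // H _; rewrite andbC.
rewrite exchange_osp_sum; apply: eq_osp_sumr => H JH _.
rewrite (eq_osp_sumr (g := fun F => if F == phi H then g H else 0)).
  by rewrite osp_sum_delta phiJ.
by move=> F _ _; rewrite eq_sym.
Qed.

Lemma quasi_shuffle_sum S U P1 P2 (g : seq {set T} -> V) :
  osp_sum S P1 (fun F => osp_sum U P2 (fun G =>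
    osp_sum (S :|: U) (fun H => (osp_restr H S == F) && (osp_restr H U == G)) g))
  = osp_sum (S :|: U) (fun H => P1 (osp_restr H S) && P2 (osp_restr H U)) g.
Proof.
have restrS H : is_osp (S :|: U) H -> is_osp S (osp_restr H S).
  by move/(is_osp_restr S); rewrite setUK.
have restrU H : is_osp (S :|: U) H -> is_osp U (osp_restr H U).
  by move/(is_osp_restr U); rewrite setIC setKU.
transitivity (osp_sum S P1 (fun F => osp_sum (S :|: U)
    (fun H => (osp_restr H S == F) && P2 (osp_restr H U)) g)); last first.
  exact: osp_sum_fiber _ _ _ restrS.
apply: eq_osp_sumr => F _ _; rewrite [RHS](eq_osp_sum (Q := fun H =>
  P2 (osp_restr H U) && (osp_restr H S == F)) (g := g)) => [|H _|//]; last exact: andbC.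
rewrite -(osp_sum_fiber _ _ _ restrU); apply: eq_osp_sumr => G _ _.
by apply: eq_osp_sum => // H _; rewrite andbC.
Qed.

Lemma sum_take_drop F F1 F2 (g : seq {set T} -> seq {set T} -> V) :
  \sum_(j < (size F).+1)
     (if (take j F == F1) && (drop j F == F2) then g (take j F) (drop j F) else 0)
  = if F == F1 ++ F2 then g F1 F2 else 0.
Proof.
case: eqP => [->|neF]; last first.
  apply: big1 => j _; case: ifP => // /andP[/eqP tF /eqP dF].
  by case: neF; rewrite -tF -dF cat_take_drop.
have j0 : (size F1 < (size (F1 ++ F2)).+1)%N by rewrite size_cat ltnS leq_addr.
rewrite (bigD1 (Ordinal j0)) //= take_size_cat // drop_size_cat // !eqxx big1 ?addr0 //.
move=> j nj; case: ifP => // /andP[/eqP tj _]; move: nj; rewrite -val_eqE /=.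
have <- : size (take j (F1 ++ F2)) = j by rewrite size_takel // -ltnS ltn_ord.
by rewrite tj eqxx.
Qed.

Lemma is_osp_take_drop S U F j : [disjoint S & U] -> is_osp (S :|: U) F ->
  is_osp S (take j F) && is_osp U (drop j F) = (osp_ground (take j F) == S).
Proof.
move=> dSU; rewrite -{1}(cat_take_drop j F); move: (take j F) (drop j F) => F1 F2.
rewrite !is_ospE osp_wf_cat osp_ground_cat => /andP[/and3P[wf1 wf2 d12] /eqP g12].
rewrite wf1 wf2 /=; apply/andP/eqP => [[/eqP //]|g1]; split; first exact/eqP.
apply/eqP/setP => x; move/setP/(_ x): g12; rewrite !in_setU g1.
case xS: (x \in S) => //= _.
by rewrite (disjointFr dSU xS) (disjointFr d12) // g1.
Qed.

Lemma deconcat_sum S U (g : seq {set T} -> seq {set T} -> V) : [disjoint S & U] ->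
  osp_sum (S :|: U) xpredT (fun F =>
    \sum_(j < (size F).+1 | osp_ground (take j F) == S) g (take j F) (drop j F))
  = osp_sum S xpredT (fun F1 => osp_sum U xpredT (g F1)).
Proof.
move=> dSU; symmetry; transitivity (osp_sum S xpredT (fun F1 =>
    osp_sum (S :|: U) xpredT (fun F => osp_sum U xpredT (fun F2 =>
      if F == F1 ++ F2 then g F1 F2 else 0)))).
  apply: eq_osp_sumr => F1 SF1 _; rewrite [RHS]exchange_osp_sum.
  by apply: eq_osp_sumr => F2 UF2 _; rewrite osp_sum_delta is_osp_cat.
rewrite exchange_osp_sum; apply: eq_osp_sumr => F SUF _; rewrite big_mkcond /=.
under eq_osp_sumr => F1 _ _ do under eq_osp_sumr => F2 _ _ do rewrite -sum_take_drop.
under eq_osp_sumr => F1 _ _ do rewrite -osp_sum_big.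
rewrite -osp_sum_big; apply: eq_bigr => j _; rewrite -(is_osp_take_drop j dSU SUF).
rewrite (eq_osp_sumr (g := fun F1 => if F1 == take j F then
    (if is_osp U (drop j F) then g (take j F) (drop j F) else 0) else 0)).
  by rewrite osp_sum_delta; case: (is_osp S _).
move=> F1 _ _; rewrite eq_sym; case: eqP => _ /=; last exact: osp_sum_eq0.
rewrite (eq_osp_sumr (g := fun F2 =>
  if F2 == drop j F then g (take j F) (drop j F) else 0)).
  by rewrite osp_sum_delta andbT.
by move=> F2 _ _; rewrite eq_sym.
Qed.

End OspSums.

Section OspSumsLinear.
Variables (T : finType) (k : fieldType).

Lemma linear_osp_sum (V W : lmodType k) (f : {linear V -> W}) (I : {set T})
    (P : pred (seq {set T})) (g : seq {set T} -> V) :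
  f (osp_sum I P g) = osp_sum I P (fun F => f (g F)).
Proof. by rewrite linear_sum; apply: eq_bigr => n _; rewrite linear_sum. Qed.

Lemma inspan_osp_sum (A : choiceType) (Q : A -> bool) (I : {set T})
    (P : pred (seq {set T})) (g : seq {set T} -> {malg k[A]}) :
  (forall F, is_osp I F -> P F -> inspan Q (g F)) -> inspan Q (osp_sum I P g).
Proof.
by move=> Qg; apply: inspan_sum => n _; apply: inspan_sum => t /andP[]; apply: Qg.
Qed.

Lemma tens_osp_sum (A B : choiceType) (I J : {set T}) (P Q : pred (seq {set T}))
    (f : seq {set T} -> A) (g : seq {set T} -> B) :
  tens (osp_sum I P (fun F => << f F >>)) (osp_sum J Q (fun G => << g G >>))
  = osp_sum I P (fun F => osp_sum J Q (fun G => << (f F, g G) >>))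
    :> {malg k[(A * B)%type]}.
Proof.
rewrite tensE linear_osp_sum; apply: eq_osp_sumr => F _ _ /=.
by rewrite linextU linear_osp_sum; apply: eq_osp_sumr => G _ _ /=; rewrite linextU.
Qed.

End OspSumsLinear.

Section Preposets.
Variable T : finType.
Implicit Types (F G H : seq {set T}) (S U I : {set T}) (p q : {set T * T}).

Lemma preposet_mem I p x y : is_preposet I p -> (x, y) \in p -> (x \in I) && (y \in I).
Proof. by case/and3P => /subsetP sub _ _ /sub; rewrite in_setX. Qed.

Lemma preposet_refl I p x : is_preposet I p -> x \in I -> (x, x) \in p.
Proof. by case/and3P => _ /forall_inP refl _ /refl. Qed.

Lemma preposet_trans I p x y z :
  is_preposet I p -> (x, y) \in p -> (y, z) \in p -> (x, z) \in p.
Proof.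
case/and3P => _ _ /forallP/(_ x)/forallP/(_ y)/forallP/(_ z)/implyP trans xy yz.
by apply: trans; rewrite xy yz.
Qed.

Lemma pdom_preposet I p : is_preposet I p -> pdom p = I.
Proof.
move=> pI; apply/setP => x; rewrite inE; apply/idP/idP; last exact: preposet_refl.
by move/(preposet_mem pI)/andP => [].
Qed.

Lemma preposet0 p : is_preposet set0 p -> p = set0.
Proof.
move=> p0; apply/setP => -[x y]; rewrite in_set0.
by apply/negP => /(preposet_mem p0); rewrite in_set0.
Qed.

Lemma mem_prestr p S x y :
  ((x, y) \in prestr p S) = [&& (x, y) \in p, x \in S & y \in S].
Proof. by rewrite /prestr in_setI in_setX. Qed.

Lemma pdom_prestr p S : pdom (prestr p S) = pdom p :&: S.
Proof. by apply/setP => x; rewrite !inE andbb. Qed.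

Lemma preposet_union S U p q : [disjoint S & U] ->
  is_preposet S p -> is_preposet U q -> is_preposet (S :|: U) (p :|: q).
Proof.
move=> dSU pS qU; apply/and3P; split.
- apply/subsetP => -[x y]; rewrite in_setU in_setX !in_setU.
  by case/orP => [/(preposet_mem pS)|/(preposet_mem qU)] /andP[-> ->]; rewrite ?orbT.
- apply/forall_inP => x; rewrite !in_setU => /orP[xS|xU].
    by rewrite (preposet_refl pS).
  by rewrite (preposet_refl qU) ?orbT.
- apply/forallP => x; apply/forallP => y; apply/forallP => z; apply/implyP.
  rewrite !in_setU => /andP[/orP[xy|xy] /orP[yz|yz]].
  + by rewrite (preposet_trans pS xy yz).
  + have /andP[_ yS] := preposet_mem pS xy; have /andP[yU _] := preposet_mem qU yz.
    by rewrite (disjointFr dSU yS) in yU.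
  + have /andP[_ yU] := preposet_mem qU xy; have /andP[yS _] := preposet_mem pS yz.
    by rewrite (disjointFr dSU yS) in yU.
  + by rewrite (preposet_trans qU xy yz) orbT.
Qed.

Lemma prestr_union S U p q : [disjoint S & U] ->
  is_preposet S p -> is_preposet U q -> prestr (p :|: q) S = p.
Proof.
move=> dSU pS qU; apply/setP => -[x y]; rewrite mem_prestr in_setU.
case xy: ((x, y) \in p); first by have /andP[-> ->] := preposet_mem pS xy.
case: ((x, y) \in q) / idP => // /(preposet_mem qU)/andP[xU _].
by rewrite (disjointFl dSU xU).
Qed.

Lemma prelinP q F : is_osp (pdom q) F ->
  reflect (forall x y, (x, y) \in q ->
             osp_le F x y && (((y, x) \notin q) ==> ~~ osp_le F y x))
          (prelin_ext (osp_rel F) q).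
Proof.
move=> qF; rewrite /prelin_ext -(is_osp_ground qF) osp_rel_total /=; last first.
  by move: qF; rewrite is_ospE => /andP[].
apply: (iffP forallP) => [ext x y xy|ext x].
  have := forallP (ext x) y; rewrite /ple /plt !mem_osp_rel xy /= => /andP[-> lt].
  by apply/implyP => yx; move: lt; rewrite yx => /andP[_ ->].
apply/forallP => y; rewrite /ple /plt !mem_osp_rel.
case xy: ((x, y) \in q) => //=; have /andP[-> lt] := ext x y xy.
by apply/implyP => yx; rewrite (implyP lt yx).
Qed.

Lemma prelin_restr p F S : is_osp (pdom p) F -> prelin_ext (osp_rel F) p ->
  prelin_ext (osp_rel (osp_restr F S)) (prestr p S).
Proof.
move=> pF /(prelinP pF) ext.
have pSF : is_osp (pdom (prestr p S)) (osp_restr F S).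
  by rewrite pdom_prestr is_osp_restr.
apply/(prelinP pSF) => x y; rewrite mem_prestr => /and3P[xy xS yS].
rewrite !osp_le_restr xS yS mem_prestr xS yS !andbT /=; exact: ext.
Qed.

Lemma prelin_union S U p q H : [disjoint S & U] ->
  is_preposet S p -> is_preposet U q -> is_osp (S :|: U) H ->
  prelin_ext (osp_rel H) (p :|: q) =
  prelin_ext (osp_rel (osp_restr H S)) p && prelin_ext (osp_rel (osp_restr H U)) q.
Proof.
move=> dSU pS qU SUH; have dUS : [disjoint U & S] by rewrite disjoint_sym.
have pqS : prestr (p :|: q) S = p := prestr_union dSU pS qU.
have pqU : prestr (p :|: q) U = q by rewrite setUC (prestr_union dUS qU pS).
have pqH : is_osp (pdom (p :|: q)) H.
  by rewrite (pdom_preposet (preposet_union dSU pS qU)).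
apply/idP/andP => [ext|[extS extU]].
  by split; [rewrite -pqS | rewrite -pqU]; apply: prelin_restr pqH ext.
have part V r : is_preposet V r -> V \subset S :|: U -> prestr (p :|: q) V = r ->
    prelin_ext (osp_rel (osp_restr H V)) r -> forall x y, (x, y) \in r ->
    osp_le H x y && (((y, x) \notin p :|: q) ==> ~~ osp_le H y x).
  move=> rV VSU pqV ext x y xy; have /andP[xV yV] := preposet_mem rV xy.
  have rH : is_osp (pdom r) (osp_restr H V).
    by rewrite (pdom_preposet rV) -{1}(setIidPr VSU) is_osp_restr.
  have := elimT (prelinP rH) ext x y xy.
  by rewrite !osp_le_restr xV yV -pqV mem_prestr xV yV !andbT.
apply/(prelinP pqH) => x y; rewrite in_setU => /orP[].
  exact: (part _ _ pS (subsetUl _ _) pqS extS).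
exact: (part _ _ qU (subsetUr _ _) pqU extU).
Qed.

Lemma prelin_cat S U p F1 F2 : [disjoint S & U] -> is_preposet (S :|: U) p ->
  is_osp S F1 -> is_osp U F2 ->
  prelin_ext (osp_rel (F1 ++ F2)) p =
  [&& lower_ideal p S, prelin_ext (osp_rel F1) (prestr p S)
                     & prelin_ext (osp_rel F2) (prestr p U)].
Proof.
move=> dSU pSU F1S F2U; have [rS rU] := osp_restr_cat_osp dSU F1S F2U.
have pF : is_osp (pdom p) (F1 ++ F2) by rewrite (pdom_preposet pSU) is_osp_cat.
have le1 x y : osp_le F1 x y -> (x \in S) && (y \in S).
  by move/osp_le_ground; rewrite (is_osp_ground F1S).
have le2 x y : osp_le F2 x y -> (x \in U) && (y \in U).
  by move/osp_le_ground; rewrite (is_osp_ground F2U).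
have le_cat x y : osp_le (F1 ++ F2) x y =
    [|| osp_le F1 x y, (x \in S) && (y \in U) | osp_le F2 x y].
  by rewrite osp_le_cat (is_osp_ground F1S) (is_osp_ground F2U).
apply/idP/and3P => [ext|[low ext1 ext2]].
  split; last 2 first.
  - by rewrite -rS prelin_restr.
  - by rewrite -rU prelin_restr.
  apply/forallP => x; apply/forallP => y; apply/implyP => /andP[xy yS].
  have /andP[] := elimT (prelinP pF) ext x y xy.
  rewrite le_cat (disjointFr dSU yS) andbF /= => /orP[/le1/andP[] //|/le2/andP[_]].
  by rewrite (disjointFr dSU yS).
have F1p : is_osp (pdom (prestr p S)) F1.
  by rewrite pdom_prestr (pdom_preposet pSU) setUK.
have F2p : is_osp (pdom (prestr p U)) F2.
  by rewrite pdom_prestr (pdom_preposet pSU) setIC setKU.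
move/(prelinP F1p): ext1 => ext1; move/(prelinP F2p): ext2 => ext2.
have leS x y : x \in S -> y \in S -> osp_le (F1 ++ F2) x y = osp_le F1 x y.
  by move=> xS yS; rewrite -[in RHS]rS osp_le_restr xS yS.
have leU x y : x \in U -> y \in U -> osp_le (F1 ++ F2) x y = osp_le F2 x y.
  by move=> xU yU; rewrite -[in RHS]rU osp_le_restr xU yU.
apply/(prelinP pF) => x y xy; have /andP[xSU ySU] := preposet_mem pSU xy.
case xS: (x \in S); case yS: (y \in S).
- rewrite !leS //; have := ext1 x y; rewrite !mem_prestr xy xS yS /= => /(_ isT).
  by rewrite andbT.
- have yU : y \in U by case/setUP: ySU; rewrite ?yS.
  rewrite !le_cat xS yS yU (disjointFr dSU xS) orbT /=.
  apply/implyP => _; apply/norP; split; apply/negP; first by move/le1; rewrite yS.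
  by move/le2; rewrite (disjointFr dSU xS) andbF.
- by move: low => /forallP/(_ x)/forallP/(_ y); rewrite /ple xy yS xS.
- have xU : x \in U by case/setUP: xSU; rewrite ?xS.
  have yU : y \in U by case/setUP: ySU; rewrite ?yS.
  rewrite !leU //; have := ext2 x y; rewrite !mem_prestr xy xU yU /= => /(_ isT).
  by rewrite andbT.
Qed.

End Preposets.

Section Relabelling.
Variables (T : finType) (s : {perm T}).
Implicit Types (F : seq {set T}) (I C : {set T}) (p : {set T * T}).

Lemma imset_permK C : (s^-1)%g @: ((s : T -> T) @: C) = C.
Proof. by rewrite -imset_comp (eq_imset _ (permK s)) imset_id. Qed.

Lemma imset_permKV C : (s : T -> T) @: ((s^-1)%g @: C) = C.
Proof. by rewrite -imset_comp (eq_imset _ (permKV s)) imset_id. Qed.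

Lemma osp_ground_relabel F :
  osp_ground (Sig_relabel s F) = (s : T -> T) @: osp_ground F.
Proof.
elim: F => [|C F IH]; first by rewrite /= !osp_ground_nil imset0.
by rewrite /= !osp_ground_cons imsetU -IH.
Qed.

Lemma osp_le_relabel F x y : osp_le (Sig_relabel s F) (s x) (s y) = osp_le F x y.
Proof.
elim: F => [//|C F IH] /=.
by rewrite -/(Sig_relabel s F) IH osp_ground_relabel !mem_imset //; apply: perm_inj.
Qed.

Lemma is_osp_relabel I F : is_osp ((s : T -> T) @: I) (Sig_relabel s F) = is_osp I F.
Proof.
have wf_relabel G : osp_wf (Sig_relabel s G) = osp_wf G.
  elim: G => [//|C G IH]; rewrite [Sig_relabel _ _]/= !osp_wf_cons -/(Sig_relabel s G).
  by rewrite IH osp_ground_relabel imset_eq0 imset_disjoint //; apply: perm_inj.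
rewrite !is_ospE wf_relabel osp_ground_relabel; congr (_ && _).
by apply/eqP/eqP => [e|->//]; rewrite -(imset_permK (osp_ground F)) e imset_permK.
Qed.

Lemma mem_PP_relabel p x y : ((s x, s y) \in PP_relabel s p) = ((x, y) \in p).
Proof.
rewrite (mem_imset (f := fun xy : T * T => (s xy.1, s xy.2)) _ (x, y)) //.
by move=> [a b] [c d] /= [] /perm_inj -> /perm_inj ->.
Qed.

Lemma pdom_relabel p : pdom (PP_relabel s p) = (s : T -> T) @: pdom p.
Proof.
apply/setP => z; rewrite -[z](permKV s) mem_imset; last exact: perm_inj.
by rewrite !inE mem_PP_relabel.
Qed.

Lemma prelin_relabel p F : is_osp (pdom p) F ->
  prelin_ext (osp_rel (Sig_relabel s F)) (PP_relabel s p) = prelin_ext (osp_rel F) p.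
Proof.
move=> pF; have spF : is_osp (pdom (PP_relabel s p)) (Sig_relabel s F).
  by rewrite pdom_relabel is_osp_relabel.
apply/(prelinP spF)/(prelinP pF) => ext x y.
  by have := ext (s x) (s y); rewrite !mem_PP_relabel !osp_le_relabel.
by rewrite -[x](permKV s) -[y](permKV s) !mem_PP_relabel !osp_le_relabel; apply: ext.
Qed.

Lemma osp_sum_relabel (V : zmodType) I (P Q : pred (seq {set T}))
    (f : seq {set T} -> V) :
  (forall F, is_osp I F -> P (Sig_relabel s F) = Q F) ->
  osp_sum ((s : T -> T) @: I) P f = osp_sum I Q (fun F => f (Sig_relabel s F)).
Proof.
move=> ePQ; apply: eq_bigr => n _.
pose h (t : n.-tuple {set T}) := map_tuple (fun B : {set T} => (s : T -> T) @: B) t.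
have h_bij : bijective h.
  exists (map_tuple (fun B : {set T} => (s^-1)%g @: B)) => t; apply: val_inj.
    by rewrite /= -map_comp -[RHS]map_id; apply: eq_map => C /=; rewrite imset_permK.
  by rewrite /= -map_comp -[RHS]map_id; apply: eq_map => C /=; rewrite imset_permKV.
rewrite (reindex h); last exact: onW_bij.
apply: eq_bigl => t; rewrite /= -/(Sig_relabel s t) is_osp_relabel.
by case It: (is_osp I t); rewrite //= ePQ.
Qed.

End Relabelling.

Section PrelinearSums.
Variables (T : finType) (V : zmodType).
Implicit Types (S U : {set T}) (p q : {set T * T}).

Definition prelin_sum p (g : seq {set T} -> V) : V :=
  osp_sum (pdom p) (fun F => prelin_ext (osp_rel F) p) g.

Lemma eq_prelin_sum p (f g : seq {set T} -> V) :
  (forall F, is_osp (pdom p) F -> f F = g F) -> prelin_sum p f = prelin_sum p g.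
Proof. by move=> efg; apply: eq_osp_sumr => F pF _; apply: efg. Qed.

Lemma prelin_sum0 (g : seq {set T} -> V) : prelin_sum set0 g = g [::].
Proof.
have pdom0 : pdom (set0 : {set T * T}) = set0 by apply/setP => x; rewrite !inE.
rewrite /prelin_sum pdom0 osp_sum0; case: ifP => // /negP[].
by apply/prelinP => [|x y]; rewrite ?pdom0 ?is_osp_nil ?in_set0.
Qed.

Lemma prelin_sum_relabel (s : {perm T}) p (g : seq {set T} -> V) :
  prelin_sum (PP_relabel s p) g = prelin_sum p (fun F => g (Sig_relabel s F)).
Proof.
by rewrite /prelin_sum pdom_relabel; apply: osp_sum_relabel => F; apply: prelin_relabel.
Qed.

Lemma prelin_sum_union S U p q (g : seq {set T} -> V) : [disjoint S & U] ->
  is_preposet S p -> is_preposet U q ->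
  prelin_sum (p :|: q) g = prelin_sum p (fun F => prelin_sum q (fun G =>
    osp_sum (S :|: U) (fun H => (osp_restr H S == F) && (osp_restr H U == G)) g)).
Proof.
move=> dSU pS qU; rewrite /prelin_sum (pdom_preposet (preposet_union dSU pS qU)).
rewrite (pdom_preposet pS) (pdom_preposet qU) quasi_shuffle_sum.
by apply: eq_osp_sum => // H SUH; rewrite (prelin_union dSU pS qU SUH).
Qed.

Lemma prelin_sum_cut S U p (g : seq {set T} -> seq {set T} -> V) : [disjoint S & U] ->
  is_preposet (S :|: U) p ->
  prelin_sum p (fun F =>
    \sum_(j < (size F).+1 | osp_ground (take j F) == S) g (take j F) (drop j F))
  = if lower_ideal p S
    then prelin_sum (prestr p S) (fun F1 => prelin_sum (prestr p U) (g F1)) else 0.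
Proof.
move=> dSU pSU; rewrite /prelin_sum !pdom_prestr (pdom_preposet pSU) setUK setIC setKU.
transitivity (osp_sum (S :|: U) xpredT (fun F =>
    if prelin_ext (osp_rel F) p then
      \sum_(j < (size F).+1 | osp_ground (take j F) == S) g (take j F) (drop j F)
    else 0)); first by rewrite osp_sum_if.
transitivity (osp_sum (S :|: U) xpredT (fun F =>
    \sum_(j < (size F).+1 | osp_ground (take j F) == S)
      if prelin_ext (osp_rel (take j F ++ drop j F)) p
      then g (take j F) (drop j F) else 0)).
  apply: eq_osp_sumr => F _ _; case: ifP => ext.
    by apply: eq_bigr => j _; rewrite cat_take_drop ext.
  by rewrite big1 // => j _; rewrite cat_take_drop ext.
rewrite (deconcat_sum (fun F1 F2 =>
  if prelin_ext (osp_rel (F1 ++ F2)) p then g F1 F2 else 0) dSU).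
case: ifP => low; last first.
  apply: osp_sum_eq0 => F1 F1S _; apply: osp_sum_eq0 => F2 F2U _.
  by rewrite (prelin_cat dSU pSU F1S F2U) low.
transitivity (osp_sum S xpredT (fun F1 => if prelin_ext (osp_rel F1) (prestr p S) then
    osp_sum U xpredT (fun F2 =>
      if prelin_ext (osp_rel F2) (prestr p U) then g F1 F2 else 0) else 0)).
  apply: eq_osp_sumr => F1 F1S _; case: ifP => ext1; last first.
    by apply: osp_sum_eq0 => F2 F2U _; rewrite (prelin_cat dSU pSU F1S F2U) ext1 andbF.
  by apply: eq_osp_sumr => F2 F2U _; rewrite (prelin_cat dSU pSU F1S F2U) low ext1.
by rewrite osp_sum_if; apply: eq_osp_sumr => F1 _ _; rewrite osp_sum_if.
Qed.

End PrelinearSums.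

Section PrelinearSumsLinear.
Variables (T : finType) (k : fieldType).

Lemma linear_prelin_sum (V W : lmodType k) (f : {linear V -> W}) (p : {set T * T})
    (g : seq {set T} -> V) :
  f (prelin_sum p g) = prelin_sum p (fun F => f (g F)).
Proof. exact: linear_osp_sum. Qed.

Lemma tens_prelin_sum (A B : choiceType) (p q : {set T * T})
    (f : seq {set T} -> A) (g : seq {set T} -> B) :
  tens (prelin_sum p (fun F => << f F >>)) (prelin_sum q (fun G => << g G >>))
  = prelin_sum p (fun F => prelin_sum q (fun G => << (f F, g G) >>))
    :> {malg k[(A * B)%type]}.
Proof. exact: tens_osp_sum. Qed.

End PrelinearSumsLinear.

Section Unweighted.
Variables (T : finType) (k : fieldType).
Implicit Types (S U I : {set T}) (p q : {set T * T}).

Lemma st_PP_basisE p : st_PP_basis k p = prelin_sum p (fun F => << F >>).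
Proof. by []. Qed.

Lemma st_PP_grade I p : PP_in I p -> inspan (@Sig_in T I) (st_PP_basis k p).
Proof.
move=> pI; rewrite /st_PP_basis (pdom_preposet pI).
by apply: inspan_osp_sum => F IF _; apply: inspanU.
Qed.

Lemma st_PP_relabel (s : {perm T}) p :
  st_PP_basis k (PP_relabel s p)
  = linext (fun F => << Sig_relabel s F >>) (st_PP_basis k p).
Proof.
rewrite !st_PP_basisE prelin_sum_relabel linear_prelin_sum.
by apply: eq_prelin_sum => F _ /=; rewrite linextU.
Qed.

(* st(p * q) = st(p) * st(q): quasi-shuffles of prelinear extensions. *)
Lemma st_PP_mul S U p q : [disjoint S & U] -> PP_in S p -> PP_in U q ->
  linext (st_PP_basis k) (PP_mul k (p, q))
  = linext (@Sig_mul T k) (tens (st_PP_basis k p) (st_PP_basis k q)).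
Proof.
move=> dSU pS qU; rewrite linextU st_PP_basisE (prelin_sum_union _ dSU pS qU).
rewrite !st_PP_basisE tens_prelin_sum !linear_prelin_sum.
apply: eq_prelin_sum => F SF /=; rewrite linear_prelin_sum.
apply: eq_prelin_sum => G UG /=; rewrite linextU /Sig_mul /=.
by rewrite (is_osp_ground SF) (is_osp_ground UG) (pdom_preposet pS) (pdom_preposet qU).
Qed.

(* Delta_{S,U}(st p) = (st (x) st)(Delta_{S,U} p): deconcatenation of
   prelinear extensions. *)
Lemma st_PP_comul S U p : [disjoint S & U] -> PP_in (S :|: U) p ->
  linext (fun pp => tens (st_PP_basis k pp.1) (st_PP_basis k pp.2)) (PP_comul k S U p)
  = linext (@Sig_comul T k S U) (st_PP_basis k p).
Proof.
move=> dSU pSU; rewrite st_PP_basisE linear_prelin_sum.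
under eq_prelin_sum => F _ do rewrite /= linextU /Sig_comul.
rewrite (prelin_sum_cut (fun F1 F2 => << (F1, F2) >>) dSU pSU) /PP_comul.
case: ifP => _; last exact: linear0.
by rewrite linextU /= !st_PP_basisE tens_prelin_sum.
Qed.

End Unweighted.

Section ClassWeights.
Variables (T : finType) (R : realType).
Implicit Types (F : seq {set T}) (S U I X L Q : {set T}) (p q : {set T * T}).
Implicit Types (w u v : {ffun {set T} -> R}).

Definition class_weight p w L : R :=
  \sum_(Q : {set T} | is_class p Q && (Q \subset L)) w Q.

Definition weigh p w F : seq ({set T} * R) := map (fun L => (L, class_weight p w L)) F.

Lemma map_fst_weigh p w F : map fst (weigh p w F) = F.
Proof. by rewrite -map_comp map_id. Qed.

Lemma class_nonempty p Q : is_class p Q -> Q != set0.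
Proof.
case/existsP => x /andP[xp /eqP ->]; apply/set0Pn; exists x.
by move: xp; rewrite !inE andbb.
Qed.

Lemma class_sub I p Q : is_preposet I p -> is_class p Q -> Q \subset I.
Proof.
move=> pI /existsP[x /andP[_ /eqP ->]]; apply/subsetP => y; rewrite inE => /andP[xy _].
by have /andP[] := preposet_mem pI xy.
Qed.

Lemma class_weight0 p w : class_weight p w set0 = 0.
Proof. by apply: big1 => Q /andP[/class_nonempty]; rewrite subset0 => /negPf ->. Qed.

Lemma weight_support I p w : wPP_in I (p, w) -> forall Q, w Q != 0 -> is_class p Q.
Proof.
by case/andP => _ /forallP wp Q; apply: contraR => Qp; rewrite (implyP (wp Q) Qp).
Qed.

Lemma eq_sum_support (P1 P2 : pred {set T}) w :
  (forall Q, w Q != 0 -> P1 Q = P2 Q) -> \sum_(Q | P1 Q) w Q = \sum_(Q | P2 Q) w Q.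
Proof.
move=> eP; rewrite big_mkcond [RHS]big_mkcond; apply: eq_bigr => Q _.
by case: (w Q =P 0) => [->|/eqP/eP ->]; rewrite ?if_same.
Qed.

Lemma class_union S U p q Q : [disjoint S & U] -> is_preposet S p -> is_preposet U q ->
  is_class p Q -> is_class (p :|: q) Q.
Proof.
move=> dSU pS qU /existsP[x /andP[xp /eqP ->]].
have xU : x \in U = false by rewrite (disjointFr dSU) // -(pdom_preposet pS).
have xpq : x \in pdom (p :|: q) by move: xp; rewrite !inE => ->.
apply/existsP; exists x; rewrite xpq /=; apply/eqP/setP => y; rewrite !inE.
case: ((x, y) \in q) / idP => [/(preposet_mem qU)/andP[]|]; first by rewrite xU.
case: ((y, x) \in q) / idP => [/(preposet_mem qU)/andP[_]|]; first by rewrite xU.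
by rewrite !orbF.
Qed.

Lemma class_weight_union S U p q u v L : [disjoint S & U] ->
  wPP_in S (p, u) -> wPP_in U (q, v) ->
  class_weight (p :|: q) [ffun Q => u Q + v Q] L
  = class_weight p u (L :&: S) + class_weight q v (L :&: U).
Proof.
move=> dSU pu qv; have pS := (andP pu).1; have qU := (andP qv).1.
have dUS : [disjoint U & S] by rewrite disjoint_sym.
rewrite /class_weight; under eq_bigr => Q _ do rewrite ffunE; rewrite big_split /=.
congr (_ + _); apply: eq_sum_support => Q.
  move/(weight_support pu) => Qp.
  by rewrite Qp (class_union dSU pS qU Qp) subsetI (class_sub pS Qp) andbT.
move/(weight_support qv) => Qq.
by rewrite Qq setUC (class_union dUS qU pS Qq) subsetI (class_sub qU Qq) andbT.
Qed.

Lemma wlookup_weigh p w F X : uniq F ->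
  wlookup (weigh p w F) X = if X \in F then class_weight p w X else 0.
Proof.
move=> uF; rewrite /wlookup /weigh big_map /=; case: ifPn => XF.
  by rewrite -big_filter filter_pred1_uniq // big_seq1.
by rewrite big1_seq // => L /andP[/eqP -> XF']; rewrite XF' in XF.
Qed.

Lemma wlookup_restr p w H S C : osp_wf H -> C \in H ->
  wlookup (weigh p w (osp_restr H S)) (C :&: S) = class_weight p w (C :&: S).
Proof.
move=> wfH CH; rewrite wlookup_weigh ?osp_wf_uniq ?osp_wf_restr //.
case: ifPn => // CS; have [->|nCS] := eqVneq (C :&: S) set0.
  by rewrite class_weight0.
by case/negP: CS; rewrite mem_filter nCS; apply: map_f.
Qed.

Lemma pclass_restr p X x : x \in X -> pclass (prestr p X) x = pclass p x :&: X.
Proof.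
move=> xX; apply/setP => y; rewrite /pclass /prestr !inE /= xX.
by case: (y \in X); rewrite ?andbF ?andbT.
Qed.

Lemma class_restr p X Q : (forall x, x \in X -> pclass p x \subset X) -> Q \subset X ->
  is_class (prestr p X) Q = is_class p Q.
Proof.
move=> cX QX; apply/existsP/existsP => -[x /andP[xp /eqP eQ]]; exists x.
  move: xp; rewrite pdom_prestr in_setI => /andP[xp xX].
  by rewrite xp eQ pclass_restr // (setIidPl (cX x xX)) eqxx.
have xX : x \in X by apply: (subsetP QX); rewrite eQ; move: xp; rewrite !inE => ->.
by rewrite pdom_prestr in_setI xp xX eQ pclass_restr // (setIidPl (cX x xX)) eqxx.
Qed.

Lemma class_weight_restr p w X L : (forall x, x \in X -> pclass p x \subset X) ->
  L \subset X -> class_weight (prestr p X) (wrestr w X) L = class_weight p w L.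
Proof.
move=> cX LX; rewrite /class_weight; apply: eq_big => [Q|Q /andP[_ QL]].
  by case QL: (Q \subset L); rewrite ?andbF // class_restr // (subset_trans QL LX).
by rewrite ffunE (subset_trans QL LX).
Qed.

Lemma weigh_restr p w X F : (forall x, x \in X -> pclass p x \subset X) ->
  osp_ground F \subset X -> weigh (prestr p X) (wrestr w X) F = weigh p w F.
Proof.
move=> cX FX; apply/eq_in_map => L LF /=; rewrite class_weight_restr //.
exact: subset_trans (osp_ground_sub LF) FX.
Qed.

Lemma pclass_lower_ideal p S x : lower_ideal p S -> x \in S -> pclass p x \subset S.
Proof.
move=> low xS; apply/subsetP => y; rewrite inE => /andP[_ yx].
by move: low => /forallP/(_ y)/forallP/(_ x)/implyP; apply; rewrite /ple yx xS.
Qed.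

Lemma pclass_upper_set S U p x : [disjoint S & U] -> is_preposet (S :|: U) p ->
  lower_ideal p S -> x \in U -> pclass p x \subset U.
Proof.
move=> dSU pSU low xU; apply/subsetP => y; rewrite inE => /andP[xy yx].
have /andP[_] := preposet_mem pSU xy; case/setUP => [yS|//].
have /subsetP/(_ x) := pclass_lower_ideal low yS.
by rewrite inE yx xy (disjointFl dSU xU) => /(_ isT).
Qed.

Lemma pclass_relabel (s : {perm T}) p x :
  pclass (PP_relabel s p) (s x) = (s : T -> T) @: pclass p x.
Proof.
apply/setP => z; rewrite -[z](permKV s) mem_imset; last exact: perm_inj.
by rewrite !inE !mem_PP_relabel.
Qed.

Lemma class_relabel (s : {perm T}) p Q :
  is_class (PP_relabel s p) ((s : T -> T) @: Q) = is_class p Q.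
Proof.
apply/existsP/existsP => -[x /andP[xp /eqP e]].
  move: xp e; have [y ->] : exists y, x = s y by exists ((s^-1)%g x); rewrite permKV.
  rewrite pdom_relabel mem_imset ?pclass_relabel; last exact: perm_inj.
  by move=> yp /(imset_inj (@perm_inj _ s)) ->; exists y; rewrite yp eqxx.
exists (s x); rewrite pdom_relabel mem_imset ?pclass_relabel; last exact: perm_inj.
by rewrite xp e eqxx.
Qed.

Lemma class_weight_relabel (s : {perm T}) p w L :
  class_weight (PP_relabel s p) [ffun Q : {set T} => w ((s^-1)%g @: Q)]
    ((s : T -> T) @: L)
  = class_weight p w L.
Proof.
rewrite /class_weight (reindex (fun Q : {set T} => (s : T -> T) @: Q)); last first.
  by apply: onW_bij; exists (fun Q : {set T} => (s^-1)%g @: Q) => Q;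
    rewrite ?imset_permK ?imset_permKV.
apply: eq_big => [Q|Q _]; last by rewrite ffunE imset_permK.
rewrite class_relabel; congr (_ && _); apply/idP/idP => [sQL|]; last exact: imsetS.
by rewrite -(imset_permK s Q) -(imset_permK s L) imsetS.
Qed.

End ClassWeights.

Section Weighted.
Variables (T : finType) (k : fieldType) (R : realType).
Implicit Types (S U I : {set T}) (p q : {set T * T}) (w u v : {ffun {set T} -> R}).
Local Notation wPPb := ({set T * T} * {ffun {set T} -> R})%type.
Local Notation stw := (@st_wPP_basis T k R).

Lemma st_wPP_basisE p w :
  stw (p, w) = prelin_sum p (fun F => << weigh p w F >>).
Proof. by []. Qed.

Lemma st_wPP_grade I (pw : wPPb) : wPP_in I pw -> inspan (@wSig_in T R I) (stw pw).
Proof.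
case: pw => p w /andP[pI _]; rewrite st_wPP_basisE /prelin_sum (pdom_preposet pI).
by apply: inspan_osp_sum => F IF _; apply: inspanU; rewrite /wSig_in map_fst_weigh.
Qed.

Lemma st_wPP_relabel (s : {perm T}) (pw : wPPb) :
  stw (wPP_relabel s pw)
  = linext (fun F => << wSig_relabel s F >>) (stw pw).
Proof.
case: pw => p w; rewrite /wPP_relabel !st_wPP_basisE prelin_sum_relabel.
rewrite linear_prelin_sum; apply: eq_prelin_sum => F _ /=.
rewrite linextU /weigh /wSig_relabel /Sig_relabel -!map_comp.
by congr << _ >>; apply: eq_map => L /=; rewrite class_weight_relabel.
Qed.

Lemma st_wPP_one : stw (wPP_one T R) = << wSig_one T R >>.
Proof. by rewrite st_wPP_basisE prelin_sum0. Qed.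

Lemma wPP_in0 (pw : wPPb) : wPP_in set0 pw -> pw = wPP_one T R.
Proof.
case: pw => p w /andP[/= /preposet0 -> /forallP w0]; congr (_, _).
apply/ffunP => Q; rewrite ffunE; apply/eqP/(implyP (w0 Q)); apply/negP => /existsP[x].
by rewrite !inE.
Qed.

(* st is multiplicative: the weight u(F_a) + v(G_b) of a block of a
   quasi-shuffle is its weight in the disjoint union. *)
Lemma st_wPP_mul S U (pu qv : wPPb) : [disjoint S & U] -> wPP_in S pu -> wPP_in U qv ->
  linext stw (wPP_mul k (pu, qv))
  = linext (@wSig_mul T k R) (tens (stw pu) (stw qv)).
Proof.
case: pu qv => [p u] [q v] dSU puS qvU.
have pS := (andP puS).1; have qU := (andP qvU).1.
rewrite linextU /wPP_mul /= st_wPP_basisE (prelin_sum_union _ dSU pS qU).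
rewrite !st_wPP_basisE tens_prelin_sum !linear_prelin_sum.
apply: eq_prelin_sum => F SF /=; rewrite linear_prelin_sum.
apply: eq_prelin_sum => G UG /=; rewrite linextU /wSig_mul /= !map_fst_weigh.
rewrite (is_osp_ground SF) (is_osp_ground UG) (pdom_preposet pS) (pdom_preposet qU).
apply: eq_osp_sumr => H SUH /andP[/eqP HF /eqP HG]; congr << _ >>.
have wfH : osp_wf H by move: SUH; rewrite is_ospE => /andP[].
rewrite -HF -HG /weigh; apply/eq_in_map => B BH /=.
by rewrite !wlookup_restr // -(class_weight_union _ dSU puS qvU).
Qed.

(* st is comultiplicative: restricting the weights to S and U does not
   change the weights of the blocks of F1 and F2. *)
Lemma st_wPP_comul S U (pw : wPPb) : [disjoint S & U] -> wPP_in (S :|: U) pw ->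
  linext (fun pp => tens (stw pp.1) (stw pp.2)) (wPP_comul k S U pw)
  = linext (@wSig_comul T k R S U) (stw pw).
Proof.
case: pw => p w dSU /andP[/= pSU _]; rewrite st_wPP_basisE linear_prelin_sum.
under eq_prelin_sum => F _ do rewrite /= linextU /wSig_comul map_fst_weigh size_map.
under eq_prelin_sum => F _ do
  under eq_bigr => j _ do rewrite /weigh -map_take -map_drop.
rewrite (prelin_sum_cut (fun F1 F2 => << (weigh p w F1, weigh p w F2) >>) dSU pSU).
rewrite /wPP_comul /=; case: ifP => low; last exact: linear0.
rewrite linextU /= 2!st_wPP_basisE tens_prelin_sum.
apply: eq_prelin_sum => F1 SF1; apply: eq_prelin_sum => F2 UF2.
rewrite !weigh_restr ?(is_osp_ground SF1) ?(is_osp_ground UF2) ?pdom_prestr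
  ?subsetIr //.
  by move=> x; apply: pclass_upper_set dSU pSU low.
by move=> x; apply: pclass_lower_ideal low.
Qed.

End Weighted.

Theorem proposition3p5 (T : finType) (k : fieldType) (R : realType) :
  hopf_monoid_morphism (@PP_in T) (@Sig_in T) (@PP_relabel T) (@Sig_relabel T)
    (@PP_mul T k) (@Sig_mul T k) (@PP_comul T k) (@Sig_comul T k)
    (PP_one T) (Sig_one T) (@st_PP T k)
  /\
  hopf_monoid_morphism (@wPP_in T R) (@wSig_in T R) (@wPP_relabel T R)
    (@wSig_relabel T R)
    (@wPP_mul T k R) (@wSig_mul T k R) (@wPP_comul T k R) (@wSig_comul T k R)
    (wPP_one T R) (wSig_one T R) (@st_wPP T k R).
Proof.
split; apply: linext_hopf_morphism.
- exact: st_PP_grade.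
- exact: st_PP_relabel.
- exact: prelin_sum0.
- exact: preposet0.
- exact: st_PP_mul.
- exact: st_PP_comul.
- exact: st_wPP_grade.
- exact: st_wPP_relabel.
- exact: st_wPP_one.
- exact: wPP_in0.
- exact: st_wPP_mul.
- exact: st_wPP_comul.
Qed.
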